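(* Let $f,g:\mathbb{R}^n\to\mathbb{R}$ satisfy assumptions (A1)–(A4) below, let $\zeta\in[0,1)$ and let $x_0\in\Omega=\{x: g(x)\le 0\}$. Then the trajectory $x(t;\zeta,x_0)$ stays, for all $t$ in its maximal existence interval, within the set $B_{f(x_0)}=\{x: f(x)\le f(x_0)\}$.
   Context: Assumptions: (A1) $\lim_{|x|\to\infty} f(x)=+\infty$; (A2) $\nabla f(x)\neq 0$ for all $x\in\Omega=\{x:g(x)\le 0\}$; (A3) $\nabla g(x)\neq 0$ for all $x\in\Omega$; (A4) $f$ and $g$ are twice continuously differentiable. For $\zeta\in[0,1)$ define the vector field $\mathbf{s}_\zeta(x)=-\frac{\nabla f(x)}{|\nabla f(x)|}-\zeta\frac{\nabla g(x)}{|\nabla g(x)|}$ ($|\cdot|$ the Euclidean norm), defined on $E=\{x\in\mathbb{R}^n: \nabla f(x)\neq 0,\ \nabla g(x)\neq 0\}$. The trajectory $x(t;\zeta,x_0)$ is the solution of $\frac{dx}{dt}=\mathbf{s}_\zeta(x)$, $x(0)=x_0$, on its maximal interval of existence $[0,T_{\zeta,x_0})$ in $E$. *)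

From HB Require Import structures.
From mathcomp Require Import all_boot all_order all_algebra.
From mathcomp Require Import all_classical all_reals all_analysis.
Set Implicit Arguments. Unset Strict Implicit. Unset Printing Implicit Defensive.
Import Order.TTheory GRing.Theory Num.Theory.
Import numFieldNormedType.Exports.
Local Open Scope ring_scope.
Local Open Scope classical_set_scope.

Section Defs.
Variables (R : realType) (n : nat).

Definition ebasis (i : 'I_n) : 'rV[R]_n := delta_mx 0 i.

Definition partial (i : 'I_n) (h : 'rV[R]_n -> R) (x : 'rV[R]_n) : R :=
  'D_(ebasis i) h x.

Definition grad (h : 'rV[R]_n -> R) (x : 'rV[R]_n) : 'rV[R]_n :=
  \row_i partial i h x.

Definition enorm (v : 'rV[R]_n) : R := Num.sqrt (\sum_i v 0 i ^+ 2).

Definition C2 (h : 'rV[R]_n -> R) : Prop :=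
  continuous h /\
  forall i : 'I_n,
    (forall x, derivable h x (ebasis i)) /\ continuous (partial i h) /\
    forall j : 'I_n,
      (forall x, derivable (partial i h) x (ebasis j)) /\
      continuous (partial j (partial i h)).

Definition coercive (h : 'rV[R]_n -> R) : Prop :=
  forall M : R, exists r : R, forall x, r <= enorm x -> M <= h x.

Definition Eset (f g : 'rV[R]_n -> R) (x : 'rV[R]_n) : Prop :=
  grad f x != 0 /\ grad g x != 0.

Definition sfield (f g : 'rV[R]_n -> R) (zeta : R) (x : 'rV[R]_n) : 'rV[R]_n :=
  - ((enorm (grad f x))^-1 *: grad f x) - zeta *: ((enorm (grad g x))^-1 *: grad g x).

(* x : R -> R^n solves dx/dt = s_zeta(x), x(0) = x0 on [0, T) (T possibly +oo),
   staying in E; at t = 0 the derivative is one-sided (from the right). *)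
Definition is_trajectory (f g : 'rV[R]_n -> R) (zeta : R) (x0 : 'rV[R]_n)
    (T : \bar R) (x : R -> 'rV[R]_n) : Prop :=
  (0 < T)%E /\ x 0 = x0 /\
  (forall t : R, 0 <= t -> (t%:E < T)%E -> Eset f g (x t)) /\
  (forall t : R, 0 < t -> (t%:E < T)%E -> is_derive t 1 x (sfield f g zeta (x t))) /\
  (fun h : R => h^-1 *: (x h - x 0)) @ (0:R)^'+ --> sfield f g zeta (x 0).

End Defs.

(* Along the trajectory,
     (f o x)' = grad f . s_zeta
              = - |grad f| - zeta (grad f . grad g) / |grad g|
             <= -(1 - zeta) |grad f| <= 0
   by Cauchy-Schwarz, so f o x is nonincreasing; at t = 0 the one-sided
   difference quotient gives right continuity.  The chain rule only needs
   continuous first partials: split the increment of f coordinate by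
   coordinate and apply the mean value theorem on each segment.  The bound
   holds at every point, also where a gradient vanishes (there x / 0 = 0
   kills the term). *)

From HB Require Import structures.
From mathcomp Require Import all_boot all_order all_algebra.
From mathcomp Require Import all_classical all_reals all_analysis.
From mathcomp Require Import ring lra.
Set Implicit Arguments. Unset Strict Implicit. Unset Printing Implicit Defensive.
Import Order.TTheory GRing.Theory Num.Theory.
Import numFieldNormedType.Exports.
Local Open Scope ring_scope.
Local Open Scope classical_set_scope.

Section Euclidean.
Variables (R : realType) (n : nat).
Implicit Types a b : 'rV[R]_n.

Definition dotr a b : R := \sum_i a 0 i * b 0 i.

Lemma enorm_ge0 a : 0 <= enorm a.
Proof. exact: sqrtr_ge0. Qed.

Lemma sqr_enorm a : enorm a ^+ 2 = dotr a a.
Proof.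
by rewrite /enorm sqr_sqrtr; [apply: eq_bigr => i _; rewrite expr2|
  apply: sumr_ge0 => i _; exact: sqr_ge0].
Qed.

Lemma enormN a : enorm (- a) = enorm a.
Proof. by congr Num.sqrt; apply: eq_bigr => i _; rewrite mxE sqrrN. Qed.

Lemma enorm_eq0 a : enorm a = 0 -> a = 0.
Proof.
move=> a0; have : dotr a a = 0 by rewrite -sqr_enorm a0 expr0n.
move/psumr_eq0P => sq0; apply/rowP => i; rewrite mxE.
have /(_ i isT)/eqP : forall j, true -> a 0 j * a 0 j = 0.
  by apply: sq0 => j _; rewrite -expr2 sqr_ge0.
by rewrite mulf_eq0 orbb => /eqP.
Qed.

Lemma dotrNl a b : dotr (- a) b = - dotr a b.
Proof. by rewrite /dotr -sumrN; apply: eq_bigr => i _; rewrite mxE mulNr. Qed.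

Lemma dotr0l b : dotr 0 b = 0.
Proof. by rewrite /dotr big1 // => i _; rewrite mxE mul0r. Qed.

Lemma dotrC a b : dotr a b = dotr b a.
Proof. by apply: eq_bigr => i _; rewrite mulrC. Qed.

Lemma ler_dotr_enorm a b : dotr a b <= enorm a * enorm b.
Proof.
have [a0|a0] := eqVneq (enorm a) 0.
  by rewrite a0 mul0r (enorm_eq0 a0) dotr0l.
have [b0|b0] := eqVneq (enorm b) 0.
  by rewrite b0 mulr0 (enorm_eq0 b0) dotrC dotr0l.
have ab_gt0 : 0 < enorm a * enorm b.
  by rewrite mulr_gt0 // lt_def ?a0 ?b0 enorm_ge0.
(* 0 <= | |b| a - |a| b |^2 = 2 |a| |b| (|a| |b| - a.b) *)
have : 0 <= \sum_i (enorm b * a 0 i - enorm a * b 0 i) ^+ 2.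
  by apply: sumr_ge0 => i _; exact: sqr_ge0.
have -> : \sum_i (enorm b * a 0 i - enorm a * b 0 i) ^+ 2 =
    enorm b ^+ 2 * dotr a a - 2 * (enorm a * enorm b) * dotr a b
    + enorm a ^+ 2 * dotr b b.
  rewrite /dotr !mulr_sumr -sumrN -!big_split /=.
  by apply: eq_bigr => i _; ring.
rewrite -!sqr_enorm; nra.
Qed.

Lemma dotr_sfield_le0 (f g : 'rV[R]_n -> R) zeta y :
  0 <= zeta <= 1 -> dotr (grad f y) (sfield f g zeta y) <= 0.
Proof.
case/andP=> zeta_ge0 zeta_le1; set a := grad f y; set b := grad g y.
have -> : dotr a (sfield f g zeta y) =
    - ((enorm a)^-1 * dotr a a) - zeta * ((enorm b)^-1 * dotr a b).
  rewrite /dotr !mulr_sumr -!sumrN -big_split /=.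
  by apply: eq_bigr => i _; rewrite /sfield !mxE -/a -/b; ring.
have -> : (enorm a)^-1 * dotr a a = enorm a.
  have [->|a0] := eqVneq (enorm a) 0; first by rewrite invr0 mul0r.
  by rewrite -sqr_enorm expr2 mulKf.
have CS : - ((enorm b)^-1 * dotr a b) <= enorm a.
  have [->|b0] := eqVneq (enorm b) 0.
    by rewrite invr0 mul0r oppr0 enorm_ge0.
  rewrite -mulrN ler_pdivrMl ?lt_def ?b0 ?enorm_ge0 //.
  rewrite mulrC -dotrNl -(enormN a).
  exact: ler_dotr_enorm.
have : zeta * - ((enorm b)^-1 * dotr a b) <= enorm a.
  exact: le_trans (ler_wpM2l zeta_ge0 CS) (ler_piMl (enorm_ge0 a) zeta_le1).
lra.
Qed.
End Euclidean.

Section DifferenceQuotient.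
Variables (R : numFieldType) (W : normedModType R).

Lemma is_derive1_diffquotP (F : R -> W) (t : R) (l : W) :
  is_derive t 1 F l <-> (fun h => h^-1 *: (F (h + t) - F t)) @ 0^' --> l.
Proof.
have E : (fun h => h^-1 *: ((F \o shift t) (h *: 1) - F t)) =
         (fun h => h^-1 *: (F (h + t) - F t)).
  by apply/funext => h /=; rewrite /shift /= [h *: 1]mulr1.
split=> [[] | Fl].
  by rewrite /derivable /derive E => ? <-.
split; rewrite /derivable /derive E; last exact: cvg_lim.
by apply/cvg_ex; exists l.
Qed.

Lemma cvg_at_right0_diffquot (F : R -> W) (l : W) :
  (fun h => h^-1 *: (F h - F 0)) @ 0^'+ --> l -> F @ 0^'+ --> F 0.
Proof.
move=> Fl.
have -> : F 0 = F 0 + 0 *: l by rewrite scale0r addr0.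
apply: (@cvg_trans _ ((fun h => F 0 + h *: (h^-1 *: (F h - F 0))) @ 0^'+)).
  apply: near_eq_cvg; near=> h.
  have h_gt0 : 0 < h by near: h; exact: nbhs_right_gt.
  by rewrite scalerA mulfV ?gt_eqF // scale1r addrC subrK.
by apply: cvgD; [exact: cvg_cst | apply: cvgZ; [exact: cvg_within | exact: Fl]].
Unshelve. all: by end_near.
Qed.

End DifferenceQuotient.

Section DirectionalMVT.
Variables (R : realType) (V : normedModType R).
Implicit Types (f : V -> R) (p v : V).

Lemma is_derive_line f p v u : derivable f (p + u *: v) v ->
  is_derive u 1 (fun s => f (p + s *: v)) ('D_v f (p + u *: v)).
Proof.
move=> fv; apply/is_derive1_diffquotP.
have -> : (fun h => h^-1 *: (f (p + (h + u) *: v) - f (p + u *: v))) =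
    (fun h => h^-1 *: ((f \o shift (p + u *: v)) (h *: v) - f (p + u *: v))).
  by apply/funext => h /=; rewrite /shift /= scalerDl addrCA addrA [p + _]addrC.
exact: fv.
Qed.

Lemma MVT_line f p v s : (forall y, derivable f y v) ->
  exists c, `|c| <= `|s| /\ f (p + s *: v) - f p = s * 'D_v f (p + c *: v).
Proof.
move=> fv; set G := fun s => f (p + s *: v).
have dG (u : R) : is_derive u (1 : R) G ('D_v f (p + u *: v)).
  exact: is_derive_line.
have cG (a b : R) : {within `[a, b], continuous G}.
  by apply: derivable_within_continuous => u _; case: (dG u).
have G0 : G 0 = f p by rewrite /G scale0r addr0.
have [s_ge0|s_lt0] := leP 0 s.
  have [c] := MVT_segment s_ge0 (fun u _ => dG u) (cG 0 s).
  rewrite in_itv /= G0 subr0 mulrC => /andP[c_ge0 c_le] ->.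
  by exists c; rewrite !ger0_norm // (le_trans c_ge0).
have [c] := MVT_segment (ltW s_lt0) (fun u _ => dG u) (cG s 0).
rewrite in_itv /= G0 sub0r mulrN => /andP[s_le c_le0] E.
exists c; rewrite !ler0_norm ?lerN2 // ?(ltW s_lt0) //.
by rewrite mulrC -[LHS]opprB E opprK.
Qed.

End DirectionalMVT.

Section ChainRule.
Variables (R : realType) (n : nat).
Implicit Types (d : 'rV[R]_n) (f : 'rV[R]_n -> R).

Lemma ler_mx_norm_entries (M N : 'rV[R]_n) :
  (forall j, `|M 0 j| <= `|N 0 j|) -> `|M| <= `|N|.
Proof.
move=> MN; change (mx_norm M <= mx_norm N); rewrite !mx_normrE.
apply: bigmax_le => [|[i j] _ /=].
  by rewrite -mx_normrE; exact: (normr_ge0 N).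
rewrite [i]ord1; apply: le_trans (MN j) _.
exact: (le_bigmax 0 (fun ij : 'I_1 * 'I_n => `|N ij.1 ij.2|) (ord0, j)).
Qed.

Definition rowtrunc (k : nat) d : 'rV[R]_n :=
  \row_i (if (i < k)%N then d 0 i else 0).

Lemma rowtrunc0 d : rowtrunc 0 d = 0.
Proof. by apply/rowP => i; rewrite !mxE. Qed.

Lemma rowtrunc_id d : rowtrunc n d = d.
Proof. by apply/rowP => i; rewrite !mxE ltn_ord. Qed.

Lemma rowtruncS (k : 'I_n) d :
  rowtrunc k.+1 d = rowtrunc k d + d 0 k *: ebasis R k.
Proof.
apply/rowP => i; rewrite !mxE ltnS leq_eqVlt -!val_eqE /=.
by case: ltngtP => [|_|/val_inj ->]; rewrite ?mulr0 ?addr0 ?mulr1 ?add0r.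
Qed.

Lemma ler_norm_rowtrunc (k : 'I_n) d c : `|c| <= `|d 0 k| ->
  `|rowtrunc k d + c *: ebasis R k| <= `|d|.
Proof.
move=> cd; apply: ler_mx_norm_entries => j; rewrite !mxE -!val_eqE /=.
by case: ltngtP => [|_|/val_inj ->]; rewrite ?mulr0 ?addr0 ?mulr1 ?add0r ?normr0.
Qed.

Lemma increment_partials f y d : (forall i z, derivable f z (ebasis R i)) ->
  exists c : 'I_n -> R, (forall k, `|c k| <= `|d 0 k|) /\
    f (y + d) - f y =
    \sum_k d 0 k * partial k f (y + rowtrunc k d + c k *: ebasis R k).
Proof.
move=> fe.
have /choice[c cP] (k : 'I_n) := MVT_line (y + rowtrunc k d) (d 0 k) (fe k).
exists c; split=> [k|]; first exact: (cP k).1.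
have := telescope_sumr (fun k => f (y + rowtrunc k d)) (leq0n n).
rewrite /= rowtrunc0 rowtrunc_id addr0 big_mkord => <-.
by apply: eq_bigr => k _; rewrite rowtruncS addrA (cP k).2.
Qed.

Lemma is_derive_comp_partials f (x : R -> 'rV[R]_n) (t : R) (v : 'rV[R]_n) :
  (forall i z, derivable f z (ebasis R i)) ->
  (forall i, continuous (partial i f)) ->
  is_derive t 1 x v -> is_derive t 1 (f \o x) (dotr (grad f (x t)) v).
Proof.
move=> fe fc /is_derive1_diffquotP xv; apply/is_derive1_diffquotP.
set y := x t; pose D h : 'rV[R]_n := x (h + t) - y.
have D0 : D @ 0^' --> (0 : 'rV[R]_n).
  apply: (@cvg_trans _ ((fun h => h *: (h^-1 *: D h)) @ 0^')).
    apply: near_eq_cvg; near=> h.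
    by rewrite scalerA mulfV ?scale1r //; near: h; exact: nbhs_dnbhs_neq.
  by rewrite -(scale0r v); apply: cvgZ xv; exact: nbhs_dnbhs.
have /choice[c cP] h := increment_partials y (D h) fe.
pose Z h (k : 'I_n) := y + rowtrunc k (D h) + c h k *: ebasis R k.
have ZP k : (Z ^~ k) @ 0^' --> y.
  apply/cvgrPdist_lt => e e_gt0; move/cvgrPdist_lt: D0 => /(_ e e_gt0).
  apply: filterS => h; rewrite sub0r normrN => Dh.
  rewrite /Z -addrA opprD addNKr normrN.
  exact: le_lt_trans (ler_norm_rowtrunc ((cP h).1 k)) Dh.
have -> : (fun h => h^-1 *: ((f \o x) (h + t) - (f \o x) t)) =
    (fun h => \sum_k partial k f (Z h k) * (h^-1 *: D h) 0 k).
  apply/funext => h /=; rewrite -[x (h + t)](subrKC y) -/(D h) (cP h).2.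
  rewrite [_ *: _]mulr_sumr; apply: eq_bigr => k _.
  by rewrite !mxE /Z mulrA mulrC.
rewrite /dotr; apply: cvg_big; first exact: add_continuous.
move=> k _; rewrite /grad mxE; apply: cvgM.
  exact: cvg_comp (ZP k) (fc k y).
exact: cvg_comp xv (@coord_continuous _ 1 n 0 k v).
Unshelve. all: by end_near.
Qed.
End ChainRule.

Lemma ler0_is_derive_le_oc (R : realType) (phi dphi : R -> R) (a b : R) :
  a <= b -> phi @ a^'+ --> phi a ->
  (forall s, a < s <= b -> is_derive s 1 phi (dphi s)) ->
  (forall s, a < s < b -> dphi s <= 0) ->
  phi b <= phi a.
Proof.
rewrite le_eqVlt => /predU1P[-> //|lt_ab] phi_a phiD phiD_le0.
have phi_derivable s : a < s <= b -> derivable phi s 1.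
  by case/phiD.
have phi_cont : {within `[a, b], continuous phi}.
  apply/continuous_within_itvP => //; split => //.
    move=> s; rewrite in_itv /= => /andP[a_s s_b].
    apply/differentiable_continuous/derivable1_diffP/phi_derivable.
    by rewrite a_s ltW.
  apply: cvg_at_left_filter; apply: differentiable_continuous.
  by apply/derivable1_diffP/phi_derivable; rewrite lt_ab lexx.
apply: (ler0_derive1_le_cc _ _ phi_cont); rewrite ?in_itv /= ?lexx ?ltW //.
- move=> s; rewrite in_itv /= => /andP[a_s s_b].
  by apply: phi_derivable; rewrite a_s ltW.
- move=> s; rewrite in_itv /= => /andP[a_s s_b].
  have [_ Dphi] : is_derive s 1 phi (dphi s) by apply: phiD; rewrite a_s ltW.
  by rewrite derive1E Dphi phiD_le0 ?a_s.
Qed.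

Theorem lemma5p2 (R : realType) (n : nat) (f g : 'rV[R]_n -> R)
    (zeta : R) (x0 : 'rV[R]_n) (T : \bar R) (x : R -> 'rV[R]_n) :
  coercive f ->
  (forall y, g y <= 0 -> grad f y != 0) ->
  (forall y, g y <= 0 -> grad g y != 0) ->
  C2 f -> C2 g ->
  0 <= zeta -> zeta < 1 ->
  g x0 <= 0 ->
  is_trajectory f g zeta x0 T x ->
  forall t : R, 0 <= t -> (t%:E < T)%E -> f (x t) <= f x0.
Proof.
move=> _ _ _ [f_cont f_C1] _ zeta_ge0 zeta_lt1 _ [_ [<- [_ [xD xD0]]]] t t_ge0 tT.
apply: (ler0_is_derive_le_oc (phi := f \o x)
  (dphi := fun s => dotr (grad f (x s)) (sfield f g zeta (x s))) t_ge0).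
- exact: cvg_comp (cvg_at_right0_diffquot xD0) (f_cont (x 0)).
- move=> s /andP[s_gt0 s_le_t].
  apply: is_derive_comp_partials => [i|i|]; first exact: (f_C1 i).1.
    exact: (f_C1 i).2.1.
  by apply: xD => //; apply: le_lt_trans tT; rewrite lee_fin.
- by move=> s _; apply: dotr_sfield_le0; rewrite zeta_ge0 ltW.
Qed.
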